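(* Index the coordinates of $\mathbb{R}^9$ by $1,\dots,9$. Let $\mathcal{S}$ be the following family of $18$ four-element subsets of $\{1,\dots,9\}$: $\{1,2,4,5\}$, $\{1,2,6,9\}$, $\{1,2,7,8\}$, $\{1,3,4,6\}$, $\{1,3,5,8\}$, $\{1,3,7,9\}$, $\{1,4,8,9\}$, $\{1,5,6,7\}$, $\{2,3,4,7\}$, $\{2,3,5,6\}$, $\{2,3,8,9\}$, $\{2,4,6,8\}$, $\{2,5,7,9\}$, $\{3,4,5,9\}$, $\{3,6,7,8\}$, $\{4,5,7,8\}$, $\{4,6,7,9\}$, $\{5,6,8,9\}$. Let $C\subset\mathbb{R}^9$ consist of the $18$ vectors $\pm 2e_j$ ($j=1,\dots,9$, $e_j$ the standard basis vectors) together with the $288$ vectors having entries $\pm1$ (arbitrary signs) on the coordinates of some $S\in\mathcal{S}$ and $0$ elsewhere; so $|C|=306$. Let $\sigma:\mathbb{R}^9\to\mathbb{R}^9$ be the coordinate permutation swapping coordinates $2$ and $3$ and swapping coordinates $4$ and $7$ (fixing the others). Let $C'=\bigl(C\setminus\{x\in C: x_1=1\}\bigr)\cup\{\sigma(x): x\in C,\ x_1=1\}$. Then $C$ and $C'$ are both kissing configurations of $306$ points in $\mathbb{R}^9$, and they are not isometric. In particular, there are at least two non-isometric kissing configurations of $306$ points in nine dimensions.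
   Context: A kissing configuration in $\mathbb{R}^n$ is a finite set of vectors all of the same norm $r>0$ such that any two distinct vectors have inner product at most $r^2/2$ (angle at least $\pi/3$); here all vectors have squared norm $4$, so distinct vectors must have inner product at most $2$. Two configurations are isometric if some orthogonal transformation of $\mathbb{R}^n$ maps one onto the other. *)

(* Vectors of R^n are row vectors 'rV[R]_n over an arbitrary
   R : realType (the real numbers).  Coordinates 1..9 of the paper are the
   ordinals 0..8 here. *)
From HB Require Import structures.
From mathcomp Require Import all_boot all_order all_algebra.
From mathcomp Require Import reals.
Set Implicit Arguments. Unset Strict Implicit. Unset Printing Implicit Defensive.
Import Order.TTheory GRing.Theory Num.Theory.
Local Open Scope ring_scope.

Section Kissing.
Variable R : realType.

Definition dotv n (u v : 'rV[R]_n) : R := \sum_(i < n) u 0 i * v 0 i.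

Definition kissing_config n (X : seq 'rV[R]_n) : Prop :=
  exists r : R, 0 < r /\
    (forall x, x \in X -> dotv x x = r ^+ 2) /\
    (forall x y, x \in X -> y \in X -> x != y -> dotv x y <= r ^+ 2 / 2).

Definition npoints n (X : seq 'rV[R]_n) : nat := size (undup X).

Definition orthogonal_mx n (Q : 'M[R]_n) : Prop := Q *m Q^T = 1%:M.

Definition isometric n (X Y : seq 'rV[R]_n) : Prop :=
  exists Q : 'M[R]_n, orthogonal_mx Q /\ [seq x *m Q | x <- X] =i Y.

Definition ev (j : 'I_9) : 'rV[R]_9 := delta_mx 0 j.

(* the family S, coordinates shifted by one (paper's k is ordinal k-1) *)
Definition fam_nat : seq (seq nat) :=
  [:: [:: 1;2;4;5]; [:: 1;2;6;9]; [:: 1;2;7;8]; [:: 1;3;4;6]; [:: 1;3;5;8];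
      [:: 1;3;7;9]; [:: 1;4;8;9]; [:: 1;5;6;7]; [:: 2;3;4;7]; [:: 2;3;5;6];
      [:: 2;3;8;9]; [:: 2;4;6;8]; [:: 2;5;7;9]; [:: 3;4;5;9]; [:: 3;6;7;8];
      [:: 4;5;7;8]; [:: 4;6;7;9]; [:: 5;6;8;9] ].

Definition fam : seq (seq 'I_9) :=
  [seq [seq (inord k.-1 : 'I_9) | k <- T] | T <- fam_nat].

Definition signvec (T : seq 'I_9) (s : {ffun 'I_4 -> bool}) : 'rV[R]_9 :=
  \sum_(k < 4) (if s k then 1 else -1) *: ev (nth ord0 T k).

Definition Cconf : seq 'rV[R]_9 :=
  [seq 2 *: ev j | j <- enum 'I_9] ++ [seq (-2) *: ev j | j <- enum 'I_9] ++
  [seq signvec T s | T <- fam, s <- enum {ffun 'I_4 -> bool}].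

(* sigma swaps coordinates 2<->3 and 4<->7 (ordinals 1<->2, 3<->6) *)
Definition sig_idx (i : 'I_9) : 'I_9 :=
  inord (match val i with 1 => 2 | 2 => 1 | 3 => 6 | 6 => 3 | k => k end)%N.

Definition sigma (x : 'rV[R]_9) : 'rV[R]_9 := \row_i x 0 (sig_idx i).

Definition Cconf' : seq 'rV[R]_9 :=
  [seq x : 'rV[R]_9 <- Cconf | x 0 ord0 != 1] ++
  [seq sigma x | x : 'rV[R]_9 <- Cconf & x 0 ord0 == 1].

End Kissing.

From HB Require Import structures.
From mathcomp Require Import all_boot all_order all_algebra.
From mathcomp Require Import reals lra.
Set Implicit Arguments. Unset Strict Implicit. Unset Printing Implicit Defensive.
Import Order.TTheory GRing.Theory Num.Theory.
Local Open Scope ring_scope.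

(* All vectors of C and C' have integer coordinates, so the kissing property and
   the number of points of both configurations are finite integer computations,
   done here by evaluation on integer lists and transported to R^9 along the
   embedding [zrow].  Orthogonal maps preserve inner products.  Two blocks of
   the family share at most two coordinates, so -3 is not an inner product of
   two vectors of C; in C' the image under sigma of a block through coordinate 1
   shares three coordinates with another block through coordinate 1, and the
   corresponding vectors with first entries 1 and -1 have inner product -3. *)

(* [\sum] is locked and does not evaluate; [zsum] is a computable replacement. *)
Definition zsum n (f : nat -> int) : int := foldr (fun i a => f i + a) 0 (iota 0 n).

Lemma zsumE n f : zsum n f = \sum_(i < n) f i.
Proof. by rewrite /zsum -(big_mkord xpredT) /index_iota subn0 -foldr_map foldrE big_map. Qed.

Definition zdot n (u v : seq int) : int := zsum n (fun i => u`_i * v`_i).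

Definition zdot_values n (A : seq (seq int)) : seq int := [seq zdot n u v | u <- A, v <- A].

Definition zkissing n (c : int) (A : seq (seq int)) : bool :=
  all (fun u => zdot n u u == c ^+ 2) A &&
  all (fun u => all (fun v => (u == v) || (zdot n u v *+ 2 <= c ^+ 2)) A) A.

Section Isometry.
Variables (R : realType) (n : nat).
Implicit Types (X Y : seq 'rV[R]_n).

Lemma dotv_mulmx (Q : 'M[R]_n) (x y : 'rV[R]_n) :
  orthogonal_mx Q -> dotv (x *m Q) (y *m Q) = dotv x y.
Proof.
have dotvE (a b : 'rV[R]_n) : dotv a b = (a *m b^T) 0 0.
  by rewrite mxE; apply: eq_bigr => i _; rewrite mxE.
by move=> QQt; rewrite !dotvE trmx_mul mulmxA -(mulmxA x) QQt mulmx1.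
Qed.

Lemma isometric_dotv X Y (y1 y2 : 'rV[R]_n) : isometric X Y -> y1 \in Y -> y2 \in Y ->
  exists x1 x2, [/\ x1 \in X, x2 \in X & dotv x1 x2 = dotv y1 y2].
Proof.
case=> Q [orthQ XQ]; rewrite -!XQ => /mapP[x1 Xx1 ->] /mapP[x2 Xx2 ->].
by exists x1, x2; rewrite dotv_mulmx.
Qed.

End Isometry.

Section IntegerRows.
Variables (R : realType) (n : nat).
Implicit Types (X Y : seq 'rV[R]_n) (A B : seq (seq int)) (u v : seq int).

Definition zrow (v : seq int) : 'rV[R]_n := \row_(i < n) (v`_i)%:~R.

Lemma zrow_inj u v : size u = n -> size v = n -> zrow u = zrow v -> u = v.
Proof.
move=> su sv /rowP E; apply: (@eq_from_nth _ 0) => [|i]; first by rewrite su sv.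
by rewrite su => lt_i_n; have /eqP := E (Ordinal lt_i_n); rewrite !mxE eqr_int => /eqP.
Qed.

Lemma dotv_zrow u v : dotv (zrow u) (zrow v) = (zdot n u v)%:~R.
Proof.
by rewrite /zdot zsumE rmorph_sum; apply: eq_bigr => i _; rewrite !mxE rmorphM.
Qed.

Lemma kissing_config_zrow (c : int) X A :
  X =i map zrow A -> zkissing n c A -> 0 < c -> kissing_config X.
Proof.
move=> XA /andP[/allP norms /allP dots] c_gt0; exists c%:~R; split; first by rewrite ltr0z.
split=> [x | x y]; rewrite ?XA.
  by case/mapP=> u /norms/eqP uu ->; rewrite dotv_zrow uu rmorphXn.
case/mapP=> u Au -> /mapP[v Av ->] neq_uv; rewrite dotv_zrow.
have /orP[/eqP eq_uv | le_uv] := allP (dots u Au) v Av; first by rewrite eq_uv eqxx in neq_uv.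
rewrite -(ler_int R) rmorphMn rmorphXn in le_uv; lra.
Qed.

Lemma npoints_zrow X A : X =i map zrow A ->
  all (fun v => size v == n) A -> uniq A -> npoints X = size A.
Proof.
move=> XA /allP sizeA uniqA.
have uniq_rows : uniq (map zrow A).
  by rewrite map_inj_in_uniq // => u v /sizeA/eqP su /sizeA/eqP sv; apply: zrow_inj.
rewrite /npoints (perm_size (uniq_perm (undup_uniq X) uniq_rows _)) ?size_map //.
by move=> x; rewrite mem_undup XA.
Qed.

Lemma not_isometric_zrow X Y A B (a : int) :
  X =i map zrow A -> Y =i map zrow B ->
  a \in zdot_values n B -> a \notin zdot_values n A -> ~ isometric X Y.
Proof.
move=> XA YB /allpairsP[[u v] [Bu Bv ->]] /= notA isoXY.
have [x1 [x2 [Xx1 Xx2 dot12]]] : exists x1 x2,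
    [/\ x1 \in X, x2 \in X & dotv x1 x2 = dotv (zrow u) (zrow v)].
  by apply: (isometric_dotv isoXY); rewrite YB map_f.
move: Xx1 Xx2 dot12; rewrite !XA => /mapP[u' Au' ->] /mapP[v' Av' ->].
rewrite !dotv_zrow => /eqP; rewrite eqr_int => /eqP eq_dot.
by move: notA; rewrite -eq_dot allpairs_f.
Qed.

End IntegerRows.

Definition signz (b : bool) : int := if b then 1 else -1.

Fixpoint bool_seqs k : seq (seq bool) :=
  if k is k'.+1 then map (cons true) (bool_seqs k') ++ map (cons false) (bool_seqs k')
  else [:: [::]].

Lemma mem_bool_seqs k (s : seq bool) : (s \in bool_seqs k) = (size s == k).
Proof.
elim: k s => [|k IHk] [|b s] //=; rewrite mem_cat.
- by apply/norP; split; apply/mapP=> -[].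
- rewrite eqSS -IHk; apply/orP/idP => [[] /mapP[t t_k [_ ->]] // | s_k].
  by case: b; [left | right]; apply: map_f.
Qed.

Lemma mem_fgraphs (aT rT : finType) (s : seq rT) :
  (s \in [seq val (fgraph f) | f <- enum {ffun aT -> rT}]) = (size s == #|aT|).
Proof.
apply/mapP/idP => [[f _ ->] | size_s]; first by rewrite size_tuple.
by exists (Finfun (Tuple size_s)); rewrite ?mem_enum ?FinfunK.
Qed.

(* The integer mirrors of [Cconf] and [Cconf'] index coordinates by nat, because
   [inord] and the enumeration of [{ffun 'I_4 -> bool}] do not evaluate. *)
Definition zaxis (c : int) (j : nat) : seq int := mkseq (fun i => c *+ (i == j)) 9.

Definition zsignvec (T : seq nat) (b : seq bool) : seq int :=
  mkseq (fun i => zsum (size b) (fun k => signz (nth false b k) *+ (nth 0%N T k == i))) 9.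

Definition fam_idx : seq (seq nat) := [seq [seq k.-1 | k <- T] | T <- fam_nat].

Definition Cint : seq (seq int) :=
  [seq zaxis 2 j | j <- iota 0 9] ++ [seq zaxis (-2) j | j <- iota 0 9] ++
  [seq zsignvec T b | T <- fam_idx, b <- bool_seqs 4].

Definition sig_nat (i : nat) : nat :=
  match i with 1 => 2 | 2 => 1 | 3 => 6 | 6 => 3 | k => k end%N.

Definition zsigma (v : seq int) : seq int := mkseq (fun i => v`_(sig_nat i)) 9.

Definition C'int : seq (seq int) :=
  [seq v <- Cint | v`_0 != 1] ++ [seq zsigma v | v <- Cint & v`_0 == 1].

Lemma nth_map_val n (T : seq 'I_n.+1) k : nth 0%N (map val T) k = nth ord0 T k.
Proof. by elim: T k => [|t T IHT] [|k] //=. Qed.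

Lemma fam_idxE : map (map val) fam = fam_idx.
Proof.
rewrite -map_comp; apply/eq_in_map => T fam_T /=; rewrite -map_comp.
apply/eq_in_map => k T_k /=; rewrite inordK //.
have : all (all (fun k => k.-1 < 9)%N) fam_nat by [].
by move/allP/(_ _ fam_T)/allP/(_ _ T_k).
Qed.

Lemma sig_idxE i : sig_idx i = sig_nat i :> nat.
Proof. by case: i => [[|[|[|[|[|[|[|[|[|k]]]]]]]]] lt_k9] //; rewrite /sig_idx inordK. Qed.

Section IntegerModel.
Variable R : realType.

Lemma axis_zrow (c : int) (j : 'I_9) : c%:~R *: ev R j = zrow R 9 (zaxis c j).
Proof. by apply/rowP => i; rewrite !mxE nth_mkseq //= mulr_natr rmorphMn. Qed.

Lemma signvec_zrow T (s : {ffun 'I_4 -> bool}) :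
  signvec R T s = zrow R 9 (zsignvec (map val T) (fgraph s)).
Proof.
have size_s : size (fgraph s) = 4%N by rewrite size_tuple card_ord.
apply/rowP => i; rewrite /signvec summxE !mxE nth_mkseq // size_s zsumE rmorph_sum.
apply: eq_bigr => k _; rewrite !mxE nth_fgraph_ord nth_map_val rmorphMn /= eq_sym mulr_natr.
by case: (s k).
Qed.

Lemma sigma_zrow v : sigma (zrow R 9 v) = zrow R 9 (zsigma v).
Proof. by apply/rowP => i; rewrite !mxE nth_mkseq // sig_idxE. Qed.

Lemma Cconf_zrow : Cconf R =i map (zrow R 9) Cint.
Proof.
have axes (c : int) :
    [seq c%:~R *: ev R j | j <- enum 'I_9] = map (zrow R 9) [seq zaxis c j | j <- iota 0 9].
  by rewrite -val_enum_ord -!map_comp; apply: eq_map => j; apply: axis_zrow.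
have graphs : [seq val (fgraph s) | s <- enum {ffun 'I_4 -> bool}] =i bool_seqs 4.
  by move=> b; rewrite (mem_fgraphs 'I_4 b) card_ord mem_bool_seqs.
rewrite /Cconf -[2 : R]/(2%:~R) -[-2 : R]/((-2)%:~R) (axes 2) (axes (-2)).
(* Unification must never try to evaluate the enumeration of [{ffun 'I_4 -> bool}]
   (it is extremely slow), hence its abstraction and [eq_catr] instead of
   rewriting with [mem_cat] under the concrete lists. *)
move: (enum {ffun 'I_4 -> bool}) graphs => F graphs.
have -> : [seq signvec R T s | T <- fam, s <- F] =
    map (zrow R 9) [seq zsignvec T b | T <- map (map val) fam, b <- [seq val (fgraph s) | s <- F]].
  rewrite [RHS]map_allpairs [RHS]allpairs_mapl [RHS]allpairs_mapr.
  by apply: eq_allpairs => T s; apply: signvec_zrow.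
have eq_catr (A B B' : seq (seq int)) : B =i B' -> A ++ B =i A ++ B'.
  by move=> BB' v; rewrite !mem_cat BB'.
rewrite fam_idxE /Cint -!map_cat; apply/eq_mem_map/eq_catr/eq_catr.
exact: mem_allpairs.
Qed.

Lemma Cconf'_zrow : Cconf' R =i map (zrow R 9) C'int.
Proof.
have first_coord v : ((zrow R 9 v) 0 ord0 == 1) = (v`_0 == 1) by rewrite mxE -(eqr_int R).
rewrite /Cconf' /C'int; move: (Cconf R) Cconf_zrow => X XC.
have keep P : filter P X =i map (zrow R 9) (filter (preim (zrow R 9) P) Cint).
  by move=> x; rewrite -filter_map !mem_filter XC.
have drop1 : [seq v <- Cint | preim (zrow R 9) (fun x => x 0 ord0 != 1) v] =
             [seq v <- Cint | v`_0 != 1].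
  by apply: eq_filter => v /=; rewrite first_coord.
have take1 : [seq v <- Cint | preim (zrow R 9) (fun x => x 0 ord0 == 1) v] =
             [seq v <- Cint | v`_0 == 1].
  by apply: eq_filter => v /=; rewrite first_coord.
move=> x; rewrite !map_cat !mem_cat keep (eq_mem_map _ (keep _)) -!map_comp.
by rewrite drop1 take1 (eq_map sigma_zrow).
Qed.

End IntegerModel.

Lemma Cint_checks :
  [/\ zkissing 9 2 Cint, all (fun v => size v == 9%N) Cint, uniq Cint & size Cint = 306%N].
Proof. by split; vm_compute. Qed.

Lemma C'int_checks :
  [/\ zkissing 9 2 C'int, all (fun v => size v == 9%N) C'int, uniq C'int & size C'int = 306%N].
Proof. by split; vm_compute. Qed.

Lemma dot_value_minus3 : -3 \notin zdot_values 9 Cint /\ -3 \in zdot_values 9 C'int.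
Proof. by split; vm_compute. Qed.

Theorem mainTheorem3 (R : realType) :
  [/\ kissing_config (Cconf R), kissing_config (Cconf' R),
      npoints (Cconf R) = 306%N, npoints (Cconf' R) = 306%N
    & ~ isometric (Cconf R) (Cconf' R)].
Proof.
have [kissC rowsC uniqC sizeC] := Cint_checks.
have [kissC' rowsC' uniqC' sizeC'] := C'int_checks.
have [notC inC'] := dot_value_minus3.
split.
- by apply: (kissing_config_zrow (@Cconf_zrow R) kissC).
- by apply: (kissing_config_zrow (@Cconf'_zrow R) kissC').
- by rewrite (npoints_zrow (@Cconf_zrow R)).
- by rewrite (npoints_zrow (@Cconf'_zrow R)).
- exact: not_isometric_zrow (@Cconf_zrow R) (@Cconf'_zrow R) inC' notC.
Qed.
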